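(* Let $D$ be a regular $(v,k,\lambda,\mu)$-PDS in a finite group $G$ with $0<\mu<k$, and assume $\sqrt\Delta$ is an integer. Let $\xi$ be a nonprincipal linear character of $G$ of prime order $p$ with kernel $N$. Then $p\mid k-\xi(D)$, \[|N\cap D|=\frac{k-\xi(D)}{p}+\xi(D),\] and $|Na\cap D|=\frac{k-\xi(D)}{p}$ for every $a\in G\setminus N$.
   Context: A $(v,k,\lambda,\mu)$-PDS in a group $G$ of order $v$ is a $k$-subset $D$ such that every nonidentity element of $D$ is $xy^{-1}$ ($x,y\in D$) in exactly $\lambda$ ways and every nonidentity element of $G\setminus D$ in exactly $\mu$ ways; regular means $D=D^{(-1)}$ and $1\notin D$. $\Delta=(\lambda-\mu)^2+4(k-\mu)$; $\chi(D)=\sum_{d\in D}\chi(d)$. *)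

From mathcomp Require Import all_boot all_order all_algebra all_fingroup all_solvable all_field all_character.
Set Implicit Arguments. Unset Strict Implicit. Unset Printing Implicit Defensive.
Import GRing.Theory Num.Theory.

Local Open Scope group_scope.

Definition pds_count (gT : finGroupType) (D : {set gT}) (g : gT) : nat :=
  #|[set u in setX D D | u.1 * u.2^-1 == g]|.

Definition is_PDS (gT : finGroupType) (G : {group gT}) (D : {set gT})
    (v k lam mu : nat) : Prop :=
  [/\ D \subset G, #|G| = v, #|D| = k &
      forall g, g \in G -> g != 1 ->
        pds_count D g = (if g \in D then lam else mu)].

Definition is_regular_PDS (gT : finGroupType) (G : {group gT}) (D : {set gT})
    (v k lam mu : nat) : Prop :=
  [/\ is_PDS G D v k lam mu, D^-1 = D & 1 \notin D].

Definition pds_Delta (k lam mu : nat) : int :=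
  ((lam%:Z - mu%:Z) ^+ 2 + 4 * (k%:Z - mu%:Z))%R.

Definition cf_set (gT : finGroupType) (G : {group gT}) (chi : 'CF(G)) (D : {set gT}) : algC :=
  (\sum_(d in D) chi d)%R.

From mathcomp Require Import all_boot all_order all_algebra all_fingroup all_solvable all_field all_character.
From mathcomp Require Import ring zify.
Import GRing.Theory Num.Theory.
Set Implicit Arguments. Unset Strict Implicit. Unset Printing Implicit Defensive.
Local Open Scope ring_scope.

(* A nonprincipal linear character xi sums to 0 over G, so the PDS equations give
   xi(D)^2 = (lam - mu) xi(D) + (k - mu); as Delta is a square, 2 xi(D) is an
   integer r.  Writing xi(D) = sum_i n_i z^i, where z is a primitive p-th root of
   unity and n_i counts the d in D with xi d = z^i, the relation 2 xi(D) - r = 0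
   has integer coefficients, and since 1 + X + ... + X^(p-1) is the minimal
   polynomial of z all these coefficients are equal: n_i = n_1 for i <> 0 and
   xi(D) = n_0 - n_1.  The kernel and its nontrivial cosets meet D in exactly
   these fibres, and k = n_0 + (p - 1) n_1. *)

Lemma sum_lin_char_eq0 (gT : finGroupType) (G : {group gT}) (xi : 'CF(G)) :
  xi \is a linear_char -> xi != 1 -> \sum_(x in G) xi x = 0.
Proof.
move=> lin nxi1; have /irrP[i Dxi] := lin_char_irr lin.
have : '[xi, 1]_G = 0.
  rewrite -irr0 Dxi cfdot_irr; case: eqP => // i0.
  by case/eqP: nxi1; rewrite Dxi i0 irr0.
rewrite cfdotE => /eqP; rewrite mulf_eq0 invr_eq0 pnatr_eq0.
rewrite (negbTE (lt0n_neq0 (cardG_gt0 G))) /= => /eqP sum0.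
rewrite -[RHS]sum0; apply: eq_bigr => x Gx.
by rewrite cfun1E Gx conjC1 mulr1.
Qed.

Lemma pds_count1 (gT : finGroupType) (D : {set gT}) : pds_count D 1%g = #|D|.
Proof.
rewrite /pds_count -(card_imset D (f := fun x => (x, x))); last by move=> x y [].
apply: eq_card => -[a b]; rewrite !inE /= -eq_mulgV1.
apply/idP/imsetP => [/andP[/andP[aD _] /eqP <-]|[x xD [-> ->]]]; first by exists a.
by rewrite xD eqxx.
Qed.

Lemma cf_set_sqr_pds_count (gT : finGroupType) (G : {group gT}) (xi : 'CF(G))
    (D : {set gT}) :
  xi \is a linear_char -> D \subset G -> D^-1%g = D ->
  cf_set xi D ^+ 2 = \sum_(g in G) xi g *+ pds_count D g.
Proof.
move=> lin sDG DV.
have XV : cf_set xi D = \sum_(y in D) xi y^-1%g.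
  rewrite /cf_set (reindex_inj invg_inj) /=; apply: eq_bigl => y.
  by rewrite -mem_invg DV.
rewrite expr2 {2}XV /cf_set big_distrlr pair_big /=.
rewrite (partition_big (fun u => u.1 * u.2^-1)%g (mem G)) /=; last first.
  by move=> [a b] /andP[aD bD]; rewrite groupM ?groupV ?(subsetP sDG).
apply: eq_bigr => g Gg; rewrite /pds_count -sumr_const.
apply: eq_big => [[a b]|[a b]]; first by rewrite !inE.
case/andP=> /andP[/= aD bD] /eqP <-.
by rewrite (lin_charM lin) ?groupV ?(subsetP sDG).
Qed.

Lemma pds_cf_set_quadratic (gT : finGroupType) (G : {group gT}) (D : {set gT})
    (v k lam mu : nat) (xi : 'CF(G)) :
  is_regular_PDS G D v k lam mu -> xi \is a linear_char -> xi != 1 ->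
  cf_set xi D ^+ 2 = (lam%:R - mu%:R) * cf_set xi D + (k%:R - mu%:R).
Proof.
move=> [[sDG _ cardD countD] DV D1] lin nxi1.
have sum_nt : \sum_(g in G | g != 1%g) xi g = -1.
  have := sum_lin_char_eq0 lin nxi1; rewrite (bigD1 1%g) //= (lin_char1 lin).
  by move/eqP; rewrite addrC addr_eq0 => /eqP.
have sum_ntD : \sum_(g | (g \in G) && (g != 1%g) && (g \in D)) xi g = cf_set xi D.
  rewrite /cf_set; apply: eq_bigl => g; case gD: (g \in D); rewrite ?andbF //.
  rewrite (subsetP sDG) //= andbT; by apply: contraNneq D1 => <-.
have count_split g : (g \in G) && (g != 1%g) ->
    xi g *+ pds_count D g
      = mu%:R * xi g + (if g \in D then (lam%:R - mu%:R) * xi g else 0).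
  by case/andP=> Gg g1; rewrite countD //; case: (g \in D); rewrite -mulr_natr; ring.
rewrite cf_set_sqr_pds_count // (bigD1 1%g) //= pds_count1 cardD (lin_char1 lin).
rewrite (eq_bigr _ count_split) big_split /= -mulr_sumr sum_nt.
rewrite -big_mkcondr /= -mulr_sumr sum_ntD.
ring.
Qed.

Lemma twice_quadratic_root (R : idomainType) (x b c s : R) :
  x ^+ 2 = b * x + c -> s ^+ 2 = b ^+ 2 + 4 * c -> 2 * x = b + s \/ 2 * x = b - s.
Proof.
move=> Hx Hs; have : (2 * x - b) ^+ 2 == s ^+ 2.
  apply/eqP; rewrite Hs.
  transitivity (4 * (x ^+ 2 - (b * x + c)) + b ^+ 2 + 4 * c); first by ring.
  by rewrite Hx subrr mulr0 add0r.
rewrite eqf_sqr => /orP[] /eqP E; [left | right]; rewrite -E; ring.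
Qed.

Lemma pds_twice_cf_set_int (gT : finGroupType) (G : {group gT}) (D : {set gT})
    (v k lam mu : nat) (xi : 'CF(G)) :
  is_regular_PDS G D v k lam mu -> (exists s : int, s ^+ 2 = pds_Delta k lam mu) ->
  xi \is a linear_char -> xi != 1 ->
  exists r : int, 2 * cf_set xi D = r%:~R.
Proof.
move=> pds [s Ds] lin nxi1.
have Ds' : (s%:~R : algC) ^+ 2 = (lam%:R - mu%:R) ^+ 2 + 4 * (k%:R - mu%:R).
  by rewrite -rmorphXn /= Ds /pds_Delta rmorphD rmorphM rmorphXn !rmorphB.
have [] := twice_quadratic_root (pds_cf_set_quadratic pds lin nxi1) Ds' => ->.
  by exists (lam%:Z - mu%:Z + s); rewrite rmorphD rmorphB.
by exists (lam%:Z - mu%:Z - s); rewrite !rmorphB.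
Qed.

Lemma horner_ratr_poly (n : nat) (a : nat -> rat) (z : algC) :
  (map_poly ratr (\poly_(i < n) a i)).[z] = \sum_(i < n) ratr (a i) * z ^+ i.
Proof.
rewrite (horner_coef_wide _ (n := n)); last by rewrite size_map_poly size_poly.
by apply: eq_bigr => i _; rewrite coef_map coef_poly ltn_ord.
Qed.

(* The minimal polynomial of z over Q is 1 + X + ... + X^(p-1), so any rational
   relation of degree < p between the powers of z is a multiple of it. *)
Lemma prim_root_int_relation_const (p : nat) (z : algC) (c : nat -> int) :
  prime p -> p.-primitive_root z -> \sum_(i < p) (c i)%:~R * z ^+ i = 0 ->
  forall i, (i < p)%N -> c i = c 0%N.
Proof.
move=> pr_p prim_z sum0; have p_gt0 := prime_gt0 pr_p.
have [mz [Dmz _] dvd_mz] := minCpolyP z.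
pose Q : {poly rat} := \poly_(i < p) 1.
pose q : {poly rat} := \poly_(i < p) (c i)%:~R.
have size_mz : size mz = p.
  rewrite -(size_map_poly (@ratr algC)) -Dmz (minCpoly_cyclotomic prim_z).
  by rewrite size_cyclotomic totient_prime // prednK.
have size_Q : size Q = p by rewrite size_poly_eq // oner_eq0.
have z_neq1 : z != 1.
  apply: contraTneq (prime_gt1 pr_p) => z1; rewrite -leqNgt.
  by apply: dvdn_leq => //; rewrite (prim_order_dvd prim_z) z1 expr1.
have mz_Q : mz %= Q.
  rewrite -dvdp_size_eqp ?size_mz ?size_Q // -dvd_mz; apply/rootP.
  rewrite horner_ratr_poly; under eq_bigr do rewrite rmorph1 mul1r.
  have /eqP := subrX1 z p; rewrite prim_expr_order // subrr eq_sym mulf_eq0.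
  by rewrite subr_eq0 (negbTE z_neq1) => /eqP.
have Q_q : Q %| q.
  rewrite -(eqp_dvdl _ mz_Q) -dvd_mz; apply/rootP; rewrite horner_ratr_poly -[RHS]sum0.
  by apply: eq_bigr => i _; rewrite rmorph_int.
have coef_q i : (i < p)%N -> q`_i = (c i)%:~R by move=> ip; rewrite coef_poly ip.
suff q_const i : (i < p)%N -> q`_i = q`_0.
  by move=> i ip; apply: (@intr_inj rat); rewrite -!coef_q ?q_const.
have [-> _|q_neq0] := eqVneq q 0; first by rewrite !coef0.
have : Q %= q by rewrite -dvdp_size_eqp // eqn_leq dvdp_leq // size_Q size_poly.
case/eqpP=> [[a b] /andP[/= a_neq0 b_neq0] Q_eq_q].
have coef_ab j : (j < p)%N -> q`_j = a / b.
  move=> jp; have /= := congr1 (fun r : {poly rat} => r`_j) Q_eq_q.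
  by rewrite !coefZ [Q`_j]coef_poly jp mulr1 => ->; rewrite mulrC mulKf.
by move=> ip; rewrite !coef_ab.
Qed.

Section LinearCharFibres.

Variables (gT : finGroupType) (G : {group gT}) (xi : 'CF(G)) (p : nat) (z : algC).
Hypotheses (xi_lin : xi \is a linear_char) (xi_order : #[xi]%CF = p)
  (z_prim : p.-primitive_root z).

Lemma lin_char_prim_root_expr x : x \in G -> exists i : 'I_p, xi x = z ^+ i.
Proof.
move=> Gx; have : xi x ^+ p = 1 by rewrite -exp_cfunE // -xi_order exp_cforder cfun1E Gx.
by case/(prim_rootP z_prim) => i ->; exists i.
Qed.

Variable D : {set gT}.
Hypothesis sDG : D \subset G.

Definition lin_char_fibre (i : nat) : {set gT} := [set d in D | xi d == z ^+ i].

Lemma big_lin_char_fibre (F : gT -> algC) :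
  \sum_(d in D) F d = \sum_(i < p) \sum_(d in lin_char_fibre i) F d.
Proof.
rewrite (exchange_big_dep (mem D)) /=; last by move=> i d _; rewrite inE => /andP[].
apply: eq_bigr => d Dd; have [i0 Di0] := lin_char_prim_root_expr (subsetP sDG d Dd).
rewrite (big_pred1 i0) // => i /=; rewrite inE Dd Di0 (eq_prim_root_expr z_prim).
by rewrite !modn_small // eq_sym.
Qed.

Lemma sum_card_lin_char_fibre : (\sum_(i < p) #|lin_char_fibre i|)%N = #|D|.
Proof.
apply/eqP; rewrite -(eqr_nat algC) natr_sum -sumr_const big_lin_char_fibre.
by apply/eqP; apply: eq_bigr => i _; rewrite sumr_const.
Qed.

Lemma cf_set_lin_char_fibre :
  cf_set xi D = \sum_(i < p) #|lin_char_fibre i|%:R * z ^+ i.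
Proof.
rewrite /cf_set big_lin_char_fibre; apply: eq_bigr => i _.
rewrite (eq_bigr (fun _ => z ^+ i)); last by move=> d; rewrite inE => /andP[_ /eqP].
by rewrite sumr_const mulr_natl.
Qed.

Lemma rcoset_cfker_lin_char_fibre a (i : nat) :
  a \in G -> xi a = z ^+ i -> (cfker xi :* a :&: D)%g = lin_char_fibre i.
Proof.
move=> Ga Dxi_a; have xi_a_neq0 := lin_char_neq0 xi_lin Ga.
apply/setP => d; rewrite (cfkerEchar (lin_charW xi_lin)).
rewrite !inE mem_rcoset !inE (lin_char1 xi_lin) andbC.
case Dd: (d \in D) => //=; have Gd := subsetP sDG d Dd.
rewrite groupM ?groupV //= (lin_charM xi_lin) ?groupV // (lin_charV xi_lin) // -Dxi_a.
by rewrite -[RHS](inj_eq (mulIf (invr_neq0 xi_a_neq0))) mulfV.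
Qed.

Lemma cfker_lin_char_fibre : (cfker xi :&: D)%g = lin_char_fibre 0.
Proof.
rewrite -[cfker xi]rcoset1; apply: rcoset_cfker_lin_char_fibre => //.
by rewrite (lin_char1 xi_lin) expr0.
Qed.

Lemma rcoset_cfker_lin_char_fibre_nt a : a \in G -> a \notin cfker xi ->
  exists2 i : 'I_p, (0 < i)%N & (cfker xi :* a :&: D)%g = lin_char_fibre i.
Proof.
move=> Ga a_ker; have [i Dxi_a] := lin_char_prim_root_expr Ga.
exists i; last exact: rcoset_cfker_lin_char_fibre Dxi_a.
rewrite lt0n; apply: contra a_ker => /eqP i0; rewrite (cfkerEchar (lin_charW xi_lin)).
by rewrite inE Ga (lin_char1 xi_lin) Dxi_a i0 expr0 eqxx.
Qed.

Hypothesis pr_p : prime p.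

(* Comparing coefficients in 2 xi(D) - r = 0, written in the powers of z. *)
Lemma lin_char_fibre_rational (r : int) : 2 * cf_set xi D = r%:~R ->
  (forall i, (0 < i < p)%N -> #|lin_char_fibre i| = #|lin_char_fibre 1|) /\
  cf_set xi D = (#|lin_char_fibre 0|%:Z - #|lin_char_fibre 1|%:Z)%:~R.
Proof.
move=> Dr; have p_gt0 := prime_gt0 pr_p; have p_gt1 := prime_gt1 pr_p.
pose c i : int := #|lin_char_fibre i|%:Z * 2 - (if i == 0%N then r else 0).
have sum_c0 : \sum_(i < p) (c i)%:~R * z ^+ i = 0.
  rewrite (eq_bigr (fun i : 'I_p => 2 * (#|lin_char_fibre i|%:R * z ^+ i)
                                  - (if i == 0%N :> nat then r%:~R else 0))).
    rewrite sumrB -mulr_sumr -cf_set_lin_char_fibre Dr -big_mkcond /=.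
    by rewrite (big_pred1 (Ordinal p_gt0)) ?subrr // => i; rewrite -val_eqE.
  move=> i _; rewrite /c rmorphB rmorphM /=.
  by case: eqP => [-> | _]; rewrite ?expr0; ring.
have c_const := prim_root_int_relation_const pr_p z_prim sum_c0.
have fibre_card i : (0 < i < p)%N ->
    #|lin_char_fibre i|%:Z * 2 = #|lin_char_fibre 0|%:Z * 2 - r.
  case/andP=> i_gt0 ip; have := c_const i ip.
  by rewrite /c eqxx (negbTE (lt0n_neq0 i_gt0)) subr0.
have fibre1_card := fibre_card 1%N p_gt1.
split=> [i /fibre_card | ]; first by lia.
have r_eq : r = (#|lin_char_fibre 0|%:Z - #|lin_char_fibre 1|%:Z) * 2.
  by rewrite mulrBl fibre1_card opprB addrC subrK.
apply: (@mulfI _ 2); first by rewrite pnatr_eq0.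
by rewrite Dr r_eq intrM rmorph_nat mulrC.
Qed.

Lemma card_lin_char_fibre_prime :
  (forall i, (0 < i < p)%N -> #|lin_char_fibre i| = #|lin_char_fibre 1|) ->
  #|D| = (#|lin_char_fibre 0| + (p - 1) * #|lin_char_fibre 1|)%N.
Proof.
move=> fibre_const; have p_gt0 := prime_gt0 pr_p.
rewrite -sum_card_lin_char_fibre (bigD1 (Ordinal p_gt0)) //=; congr (_ + _)%N.
rewrite (eq_bigr (fun _ => #|lin_char_fibre 1|)) => [|i i_neq0]; last first.
  by apply: fibre_const; rewrite ltn_ord andbT lt0n.
by rewrite sum_nat_const cardC1 card_ord subn1.
Qed.

End LinearCharFibres.

Unset Implicit Arguments.

Theorem mainTheorem3 (gT : finGroupType) (G : {group gT}) (D : {set gT})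
    (v k lam mu : nat) (xi : 'CF(G)) (p : nat) :
  is_regular_PDS G D v k lam mu ->
  (0 < mu)%N -> (mu < k)%N ->
  (exists s : int, (s ^+ 2)%R = pds_Delta k lam mu) ->
  xi \is a linear_char -> xi != 1%R -> prime p -> #[xi]%CF = p ->
  exists m : int,
    [/\ cf_set xi D = (m%:~R)%R,
        (p%:Z %| k%:Z - m)%Z,
        #|cfker xi :&: D|%:Z = (((k%:Z - m) %/ p%:Z)%Z + m)%R &
        forall a, a \in G -> a \notin cfker xi ->
          #|(cfker xi :* a)%g :&: D|%:Z = ((k%:Z - m) %/ p%:Z)%Z].
Proof.
move=> pds _ _ Delta_sq xi_lin xi_neq1 pr_p xi_order.
have [[sDG _ cardD _] _ _] := pds.
have [z z_prim] := C_prim_root_exists (prime_gt0 pr_p).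
have [r Dr] := pds_twice_cf_set_int pds Delta_sq xi_lin xi_neq1.
have [fibre_const ->] := lin_char_fibre_rational xi_lin xi_order z_prim sDG pr_p Dr.
set n0 := #|lin_char_fibre xi z D 0|; set n1 := #|lin_char_fibre xi z D 1|.
have k_sub : k%:Z - (n0%:Z - n1%:Z) = n1%:Z * p%:Z :> int.
  rewrite -cardD (card_lin_char_fibre_prime xi_order z_prim sDG pr_p fibre_const).
  by rewrite -/n0 -/n1; have := prime_gt0 pr_p; nia.
have div_p : ((k%:Z - (n0%:Z - n1%:Z)) %/ p%:Z)%Z = n1.
  by rewrite k_sub mulzK // eqz_nat -lt0n prime_gt0.
exists (n0%:Z - n1%:Z); split=> //; rewrite ?div_p.
- by rewrite k_sub dvdz_mull.
- by rewrite (cfker_lin_char_fibre z xi_lin sDG) -/n0; lia.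
move=> a Ga a_ker.
have [i i_gt0 ->] := rcoset_cfker_lin_char_fibre_nt xi_lin xi_order z_prim sDG Ga a_ker.
by rewrite fibre_const // i_gt0 ltn_ord.
Qed.
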